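(* Let $p\in(0,1)$. Let $B_p(x)=\sum_{n\ge0}(1-p)^{\binom{n+1}{2}}x^n$, and let $h_m=[x^m]\,\frac{1}{B_p(x)}$ denote the coefficient of $x^m$ in the power series $1/B_p(x)$. (a) For every $n\ge1$, \[ h_n=\sum_{j=1}^{n}(-1)^j\sum_{\mathbf a\in\mathcal C_{n,j}}(1-p)^{\sum_{i=1}^j\binom{a_i+1}{2}}. \] (b) For $n\ge1$, let $X_n$ be the maximum weight of a directed path from $1$ to $n$ in the transitive tournament on $\{1,\ldots,n\}$ with independent $\mathrm{Bernoulli}(p)$ edge weights, and let $g(n)=1+\mathbb{E}[X_n]$. Then \[ g(n)=\sum_{m=0}^{n-1}(n-m)h_m=\sum_{m=0}^{n-1}(n-m)\sum_{\mathbf a\in\mathcal C_m}(-1)^{l(\mathbf a)}(1-p)^{\sum_{i=1}^{l(\mathbf a)}\binom{a_i+1}{2}}, \] and \[ g(n)=\sum_{m=0}^{n-1}\sum_{j=0}^{m}\sum_{k=0}^{j}(-1)^k\sum_{\mathbf a\in\mathcal C_{j,k}}(1-p)^{\sum_{i=1}^k\binom{a_i+1}{2}}. \]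
   Context: For integers $n\ge0$ and $i\ge0$, an $i$-composition of $n$ is a tuple $\mathbf a=(a_1,\ldots,a_i)$ of positive integers with $a_1+\cdots+a_i=n$. The set of all $i$-compositions of $n$ is $\mathcal C_{n,i}$. For $n\ge1$, $\mathcal C_n=\bigcup_{i=1}^n\mathcal C_{n,i}$ is the set of all compositions of $n$. Convention: $\mathcal C_{0,0}=\mathcal C_0$ consists of the single empty composition, of length $0$, with empty exponent sum $0$ (so it contributes $1$); for $j\ge1$, $\mathcal C_{j,0}=\emptyset$. The length of $\mathbf a\in\mathcal C_{n,i}$ is $l(\mathbf a)=i$. The transitive tournament on $\{1,\ldots,n\}$ has a directed edge $(i,j)$ for each $1\le i<j\le n$. Its edges carry independent weights in $\{0,1\}$, each equal to $1$ with probability $p$. $X_n$ is the maximum, over directed paths from $1$ to $n$, of the sum of the edge weights along the path. *)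

From HB Require Import structures.
From mathcomp Require Import all_boot all_order all_algebra.
Set Implicit Arguments. Unset Strict Implicit. Unset Printing Implicit Defensive.
Import Order.TTheory GRing.Theory Num.Theory.
Local Open Scope ring_scope.

Definition Bcoef (R : realFieldType) (p : R) (n : nat) : R :=
  (1 - p) ^+ 'C(n.+1, 2).

(* h is the coefficient sequence of the formal power series 1/B, i.e. the
   Cauchy product of b and h is the series 1 (coefficients [m == 0]). *)
Definition is_inverse_series (R : realFieldType) (b h : nat -> R) : Prop :=
  forall m : nat, \sum_(k < m.+1) b k * h (m - k)%N = (m == 0%N)%:R.

(* i-compositions of n: tuples (a_1..a_i) of positive integers summing to n.
   Every part is <= n, so they are represented as finite functions
   'I_i -> 'I_n.+1 (a bijective encoding of C_{n,i}). *)
Definition is_composition (n i : nat) (a : {ffun 'I_i -> 'I_n.+1}) : bool :=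
  [forall k, (0 < (a k : nat))%N] && ((\sum_(k < i) (a k : nat))%N == n).

Definition compW (R : realFieldType) (p : R) (n i : nat) : R :=
  \sum_(a : {ffun 'I_i -> 'I_n.+1} | is_composition a)
     (1 - p) ^+ (\sum_(k < i) 'C((a k : nat).+1, 2))%N.

(* sum over a in C_m (= disjoint union of C_{m,i}, i <= m; C_0 = C_{0,0}) of
   (-1)^{l(a)} (1-p)^(sum binom(a_k+1,2)) *)
Definition compSum (R : realFieldType) (p : R) (m : nat) : R :=
  \sum_(i < m.+1) (-1) ^+ i * compW p m i.

(* Edges (i,j), i < j, of the transitive tournament on n vertices
   (vertex k : 'I_n stands for vertex k+1 of the paper). *)
Definition edge (n : nat) := {e : 'I_n * 'I_n | (e.1 < e.2)%N}.

Definition ewt (n : nat) (w : {ffun edge n -> bool}) (u v : 'I_n) : nat :=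
  match @insub _ (fun e : 'I_n * 'I_n => (e.1 < e.2)%N) (edge n) (u, v) with
  | Some e => nat_of_bool (w e)
  | None => 0%N
  end.

(* A directed path from the first to the last vertex in the transitive
   tournament is determined by its vertex set S (containing both endpoints),
   visited in increasing order. *)
Definition is_path_set (n : nat) (S : {set 'I_n}) : bool :=
  [forall k : 'I_n, ((k : nat) == 0%N) || ((k : nat) == n.-1) ==> (k \in S)].

Definition path_weight (n : nat) (w : {ffun edge n -> bool}) (S : {set 'I_n}) : nat :=
  let s := sort (fun x y : 'I_n => (x <= y)%N) (enum S) in
  (\sum_(e <- zip s (behead s)) ewt w e.1 e.2)%N.

Definition Xn (n : nat) (w : {ffun edge n -> bool}) : nat :=
  (\max_(S : {set 'I_n} | is_path_set S) path_weight w S)%N.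

Definition EXn (R : realFieldType) (p : R) (n : nat) : R :=
  \sum_(w : {ffun edge n -> bool})
     (\prod_(e : edge n) (if w e then p else 1 - p)) * (Xn w)%:R.

Definition gfun (R : realFieldType) (p : R) (n : nat) : R := 1 + EXn p n.

(* (a) Writing B = 1 + (B - 1), 1/B = sum_i (-1)^i (B - 1)^i, and the coefficient
   of x^n in (B - 1)^i is the sum, over the i-compositions a of n, of the
   products of the coefficients (1-p)^binom(a_k+1,2).
   (b) Let D(v) be the heaviest weight of a path from the first vertex to v and
   L(v) the number of u <= v with D(u) = D(v).  D(v+1) = D(v) + 1 exactly when
   one of the L(v) edges from this final plateau into v+1 has weight 1; these
   edges are independent of D(0), ..., D(v), so P(L(v+1) = l+1) =
   (1-p)^l P(L(v) = l) and P(L(v+1) = 1) = sum_l (1 - (1-p)^l) P(L(v) = l).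
   Hence r(v) = P(L(v) = 1) obeys r(v+1) = sum_l r(v-l) (b_l - b_(l+1)), the
   recursion satisfied by the partial sums H(v) = h_0 + ... + h_v of 1/B, and
   r(0) = H(0) = 1.  Since E[X_n] = r(1) + ... + r(n-1), we get
   g(n) = H(0) + ... + H(n-1) = sum_(m<n) (n-m) h_m. *)

From HB Require Import structures.
From mathcomp Require Import all_boot all_order all_algebra.
From mathcomp Require Import zify ring.

Set Implicit Arguments.
Unset Strict Implicit.
Unset Printing Implicit Defensive.
Import GRing.Theory.
Local Open Scope ring_scope.

Section FfunCons.

Variables (T : finType) (i : nat).

Definition ffun_cons (x : T) (g : {ffun 'I_i -> T}) : {ffun 'I_i.+1 -> T} :=
  [ffun k => if unlift ord0 k is Some k' then g k' else x].

Lemma ffun_cons0 x g : ffun_cons x g ord0 = x.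
Proof. by rewrite ffunE unlift_none. Qed.

Lemma ffun_cons_lift x g k : ffun_cons x g (lift ord0 k) = g k.
Proof. by rewrite ffunE liftK. Qed.

Lemma big_ffun_cons (V : nmodType) (F : {ffun 'I_i.+1 -> T} -> V) :
  \sum_f F f = \sum_x \sum_g F (ffun_cons x g).
Proof.
rewrite pair_big /= (reindex (fun xg => ffun_cons xg.1 xg.2)) //; apply: onW_bij.
exists (fun f : {ffun 'I_i.+1 -> T} => (f ord0, [ffun k => f (lift ord0 k)])).
- move=> [x g] /=; rewrite ffun_cons0; congr pair.
  by apply/ffunP => k; rewrite ffunE ffun_cons_lift.
- move=> f; apply/ffunP => k; rewrite ffunE.
  by case: unliftP => [j ->|->]; rewrite ?ffunE.
Qed.

End FfunCons.

Section Compositions.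

Variables (R : comPzSemiRingType) (b : nat -> R).

(* [conv_pow i n] is the coefficient of x^n in (B(x) - b 0)^i, B = sum b_n x^n. *)
Fixpoint conv_pow (i n : nat) : R :=
  if i is i'.+1 then \sum_(a < n) b a.+1 * conv_pow i' (n - a.+1)%N else (n == 0)%:R.

Lemma conv_pow_small i n : (n < i)%N -> conv_pow i n = 0.
Proof.
elim: i n => [|i IHi] n //= lt_n_i.
by apply: big1 => a _; rewrite IHi ?mulr0 //; have := ltn_ord a; lia.
Qed.

Definition is_comp M i n (a : {ffun 'I_i -> 'I_M}) : bool :=
  [forall k, (0 < (a k : nat))%N] && ((\sum_(k < i) (a k : nat))%N == n).

Lemma is_comp_cons M i n (x : 'I_M) (g : {ffun 'I_i -> 'I_M}) :
  is_comp n (ffun_cons x g) = (0 < x <= n)%N && is_comp (n - x)%N g.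
Proof.
rewrite /is_comp big_ord_recl ffun_cons0.
under eq_bigr do rewrite ffun_cons_lift.
have -> : [forall k, (0 < (ffun_cons x g k : nat))%N] =
          (0 < x)%N && [forall k, (0 < (g k : nat))%N].
  apply/forallP/andP => [pos_xg|[pos_x /forallP pos_g] k].
    split; first by have := pos_xg ord0; rewrite ffun_cons0.
    by apply/forallP => k; have := pos_xg (lift ord0 k); rewrite ffun_cons_lift.
  by rewrite ffunE; case: unlift.
by case: (0 < x)%N => //=; case: forallP => _; rewrite ?andbF //=; lia.
Qed.

Lemma sum_comp_prod M i n : (n < M)%N ->
  \sum_(a : {ffun 'I_i -> 'I_M} | is_comp n a) \prod_(k < i) b (a k) = conv_pow i n.
Proof.
elim: i n => [|i IHi] n lt_n_M /=.
  rewrite (eq_bigl (fun _ => n == 0%N)) => [|a]; last first.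
    by rewrite /is_comp big_ord0 eq_sym andb_idl // => _; apply/forallP => -[].
  case: eqP => _; last by rewrite big_pred0.
  under eq_bigr do rewrite big_ord0.
  by rewrite sumr_const card_ffun (_ : #|'I_0| = 0%N) ?card_ord.
rewrite big_mkcond big_ffun_cons /=.
transitivity (\sum_(x < M | (0 < x <= n)%N) b x * conv_pow i (n - x)%N).
  rewrite [RHS]big_mkcond; apply: eq_bigr => x _.
  under eq_bigr do rewrite is_comp_cons big_ord_recl ffun_cons0.
  case: ifP => [/andP[_ le_x_n]|_]; last by rewrite big1 // => g; rewrite andFb.
  rewrite -IHi ?mulr_sumr -?big_mkcond; last by lia.
  by apply: eq_bigr => g _; under eq_bigr do rewrite ffun_cons_lift.
rewrite -(big_mkord (fun x => 0 < x <= n)%N (fun x => b x * conv_pow i (n - x)%N)).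
rewrite (big_cat_nat _ (n := n.+1)) //= [X in _ + X]big1_seq ?addr0.
  by rewrite big_ltn_cond // big_add1 big_mkord; apply: eq_bigl => a; rewrite ltn_ord.
by move=> x /andP[pos_x]; rewrite mem_index_iota; lia.
Qed.

End Compositions.

Section InverseSeries.

Variables (R : realFieldType) (b : nat -> R).
Hypothesis b0 : b 0%N = 1.

Lemma is_inverse_series_unique h h' :
  is_inverse_series b h -> is_inverse_series b h' -> h =1 h'.
Proof.
move=> inv_h inv_h' n; elim/ltn_ind: n => -[|n] IHn.
  by have := inv_h 0%N; have := inv_h' 0%N; rewrite !big_ord1 b0 !mul1r => -> ->.
have rec g : is_inverse_series b g ->
    g n.+1 = - \sum_(k < n.+1) b k.+1 * g (n - k)%N.
  by move=> /(_ n.+1) /eqP; rewrite big_ord_recl b0 mul1r subn0 addr_eq0 => /eqP ->.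
rewrite (rec h) // (rec h') //; congr (- _); apply: eq_bigr => k _.
by rewrite IHn // ltnS leq_subr.
Qed.

Definition inv_coef (n : nat) : R := \sum_(i < n.+1) (-1) ^+ i * conv_pow b i n.

Lemma inv_coef_widen n K : (n < K)%N ->
  inv_coef n = \sum_(i < K) (-1) ^+ i * conv_pow b i n.
Proof.
move=> lt_n_K; rewrite /inv_coef (big_ord_widen K (fun i => (-1) ^+ i * conv_pow b i n)) //.
rewrite big_mkcond; apply: eq_bigr => i _.
by case: ltnP => // le_i_n; rewrite conv_pow_small ?mulr0.
Qed.

Lemma is_inverse_series_inv_coef : is_inverse_series b inv_coef.
Proof.
case=> [|m]; first by rewrite big_ord1 b0 mul1r /inv_coef big_ord1 mul1r.
rewrite big_ord_recl b0 mul1r subn0 (@inv_coef_widen _ m.+2) //.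
rewrite [\sum_(i < m.+2) _]big_ord_recl /= mulr0 add0r.
under eq_bigr do rewrite mulr_sumr.
rewrite exchange_big -big_split big1 //= => a _.
rewrite subSS (@inv_coef_widen _ m.+1) ?ltnS ?leq_subr // mulr_sumr -big_split.
by rewrite big1 // => i _; rewrite /= exprS mulN1r mulNr mulrCA add0n addNr.
Qed.

End InverseSeries.

Lemma compW_conv_pow (R : realFieldType) (p : R) n i :
  compW p n i = conv_pow (Bcoef p) i n.
Proof.
rewrite -(@sum_comp_prod _ _ n.+1) //; apply: eq_bigr => a _.
by rewrite expr_sum.
Qed.

Lemma compSum_inverse (R : realFieldType) (p : R) h :
  is_inverse_series (Bcoef p) h -> h =1 compSum p.
Proof.
move=> inv_h n.
rewrite (is_inverse_series_unique _ inv_h (is_inverse_series_inv_coef _)) //.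
by apply: eq_bigr => i _; rewrite compW_conv_pow.
Qed.

Section LongestPath.

Variable W : nat -> nat -> nat.

(* [lpath v] is the heaviest W-weight of an increasing path from 0 to v; the
   first argument of [lpath_fuel] is fuel, which [lpath] makes sufficient. *)
Fixpoint lpath_fuel (k v : nat) : nat :=
  if k is k'.+1 then \max_(u < v) (lpath_fuel k' u + W u v) else 0.

Definition lpath (v : nat) : nat := lpath_fuel v v.

Lemma lpath_fuel_stable k1 k2 v :
  (v <= k1)%N -> (v <= k2)%N -> lpath_fuel k1 v = lpath_fuel k2 v.
Proof.
elim: k1 k2 v => [|k1 IHk] [|k2] [|v] //= le_v_k1 le_v_k2; rewrite ?big_ord0 //.
by apply: eq_bigr => u _; rewrite (IHk k2) //; have := ltn_ord u; lia.
Qed.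

Lemma lpathS v : lpath v.+1 = \max_(u < v.+1) (lpath u + W u v.+1).
Proof.
by apply: eq_bigr => u _; congr addn; apply: lpath_fuel_stable; rewrite // -ltnS.
Qed.

Lemma lpath_edge u v : (u < v)%N -> (lpath u + W u v <= lpath v)%N.
Proof.
case: v => // v lt_u_v; rewrite lpathS.
exact: (@leq_bigmax _ (fun i : 'I_v.+1 => lpath i + W i v.+1) (Ordinal lt_u_v)).
Qed.

Lemma lpath_mono : {homo lpath : u v / (u <= v)%N}.
Proof.
move=> u v /subnKC <-; elim: (v - u)%N => [|m IHm]; first by rewrite addn0.
by rewrite addnS (leq_trans IHm) // (leq_trans _ (lpath_edge (ltnSn _))) ?leq_addr.
Qed.

End LongestPath.

Lemma lpath_eq W W' v :
  (forall a b, (b <= v)%N -> W a b = W' a b) -> lpath W v = lpath W' v.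
Proof.
elim/ltn_ind: v => -[|v] IHv eqW //; rewrite !lpathS; apply: eq_bigr => u _.
have lt_u_v := ltn_ord u.
by rewrite eqW // (IHv u) // => a b le_b_u; apply: eqW; lia.
Qed.

Section UnitWeights.

Variable W : nat -> nat -> nat.
Hypothesis W_le1 : forall a b, (W a b <= 1)%N.

Definition lpath_step v : bool :=
  [exists u : 'I_v.+1, (lpath W u == lpath W v) && (W u v.+1 == 1%N)].

Definition plateau v : nat := \sum_(u < v.+1) (lpath W u == lpath W v).

Lemma lpathS_step v : lpath W v.+1 = (lpath W v + lpath_step v)%N.
Proof.
apply/eqP; rewrite eqn_leq; apply/andP; split.
  rewrite lpathS; apply/bigmax_leqP => u _.
  have le_u_v : (lpath W u <= lpath W v)%N by apply: lpath_mono; rewrite -ltnS.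
  have := W_le1 u v.+1; case: (boolP (lpath_step v)) => [_|no_step]; first lia.
  have : ~~ ((lpath W u == lpath W v) && (W u v.+1 == 1%N)).
    by apply: contra no_step => step_u; apply/existsP; exists u.
  by case/nandP => /eqP; lia.
case: (boolP (lpath_step v)) => [/existsP[u /andP[/eqP lpath_u /eqP W_u]]|_].
  by have := lpath_edge W (ltn_ord u); rewrite lpath_u W_u addn1.
by rewrite addn0 lpath_mono.
Qed.

Lemma plateau_gt0 v : (0 < plateau v)%N.
Proof. by rewrite /plateau big_ord_recr /= eqxx addn1. Qed.

Lemma plateau_le v : (plateau v <= v.+1)%N.
Proof.
apply: (@leq_trans (\sum_(u < v.+1) 1)); first exact: leq_sum (fun u _ => leq_b1 _).
by rewrite sum1_card card_ord.
Qed.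

Lemma plateauS v : plateau v.+1 = if lpath_step v then 1%N else (plateau v).+1.
Proof.
rewrite /plateau big_ord_recr /= eqxx lpathS_step.
case: (lpath_step v) => /=.
  rewrite big1 // => u _; have : (lpath W u <= lpath W v)%N by apply: lpath_mono; rewrite -ltnS.
  by case: eqP => //; lia.
by rewrite addn0 addn1; congr _.+1; apply: eq_bigr => u _; rewrite addn0.
Qed.

Lemma plateau_eq1 v : (plateau v.+1 == 1%N) = lpath_step v.
Proof.
by rewrite plateauS; case: lpath_step => //=; rewrite eqSS eqn0Ngt plateau_gt0.
Qed.

End UnitWeights.

Definition seq_weight (W : nat -> nat -> nat) (t : seq nat) : nat :=
  \sum_(e <- zip t (behead t)) W e.1 e.2.

Lemma seq_weight_rcons W x s y :
  seq_weight W (x :: rcons s y) = (seq_weight W (x :: s) + W (last x s) y)%N.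
Proof.
elim: s x => [|a s IHs] x; first by rewrite /seq_weight /= big_seq1 big_nil.
by rewrite rcons_cons /seq_weight /= !big_cons -/(seq_weight _ _) IHs addnA.
Qed.

Lemma path_ltn_le_last x s : path ltn x s -> all (leq^~ (last x s)) (x :: s).
Proof.
elim/last_ind: s => [|s y IHs]; first by rewrite /= leqnn.
rewrite rcons_path last_rcons -rcons_cons all_rcons leqnn => /andP[/IHs le_last lt_y].
by apply: sub_all le_last => z /=; lia.
Qed.

Lemma seq_weight_le_lpath W x s :
  path ltn x s -> (lpath W x + seq_weight W (x :: s) <= lpath W (last x s))%N.
Proof.
elim/last_ind: s => [|s y IHs]; first by rewrite /seq_weight /= big_nil addn0.
rewrite rcons_path seq_weight_rcons last_rcons addnA => /andP[/IHs le_s lt_y].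
exact: leq_trans (leq_add le_s (leqnn _)) (lpath_edge W lt_y).
Qed.

Lemma lpath_attained W v :
  exists s, [/\ path ltn 0 s, last 0 s = v & seq_weight W (0 :: s) = lpath W v].
Proof.
elim/ltn_ind: v => -[|v] IHv; first by exists [::]; rewrite /seq_weight /= big_nil.
case: (@eq_bigmax _ (fun u : 'I_v.+1 => lpath W u + W u v.+1)%N).
  by rewrite card_ord.
move=> u lpathS_u.
have [s [path_s last_s weight_s]] := IHv u (ltn_ord u).
exists (rcons s v.+1); rewrite rcons_path last_rcons seq_weight_rcons path_s last_s.
by rewrite weight_s lpathS lpathS_u; split => //=; exact: ltn_ord.
Qed.

Section PathSets.

Variables (N : nat) (w : {ffun edge N.+1 -> bool}).

(* Vertex k : 'I_N.+1 is the paper's vertex k+1; through [inord], [wt] is only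
   meaningful for a, b <= N. *)
Definition wt (a b : nat) : nat := ewt w (inord a) (inord b).

Definition vertices (S : {set 'I_N.+1}) : seq nat := sort leq (map val (enum S)).

Lemma sorted_vertices S : sorted ltn (vertices S).
Proof.
rewrite ltn_sorted_uniq_leq sort_uniq (sort_sorted leq_total) andbT.
by rewrite map_inj_uniq ?enum_uniq //; exact: val_inj.
Qed.

Lemma mem_vertices S x : (x \in vertices S) = (x < N.+1)%N && (inord x \in S).
Proof.
rewrite mem_sort; apply/mapP/andP => [[y y_S ->]|[lt_x x_S]].
  by rewrite ltn_ord inord_val -mem_enum.
by exists (inord x : 'I_N.+1); rewrite ?mem_enum //= inordK.
Qed.

Lemma path_weightE S : path_weight w S = seq_weight wt (vertices S).
Proof.
rewrite /path_weight /seq_weight /vertices sort_map behead_map.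
set s := sort _ (enum S).
have -> : zip [seq val i | i <- s] [seq val i | i <- behead s] =
          [seq (val e.1, val e.2) | e <- zip s (behead s)].
  by elim: s (behead s) => [|a s IHs] [|b t] //=; rewrite IHs.
by rewrite big_map; apply: eq_bigr => e _; rewrite /wt !inord_val.
Qed.

Lemma Xn_le_lpath : (Xn w <= lpath wt N)%N.
Proof.
apply/bigmax_leqP => S _; rewrite path_weightE.
have := sorted_vertices S; have := mem_vertices S.
case: (vertices S) => [|x s] mem_t; first by rewrite /seq_weight big_nil.
move=> /(seq_weight_le_lpath wt) le_last.
rewrite (leq_trans (leq_addl _ _) (leq_trans le_last _)) //.
by apply: lpath_mono; have := mem_last x s; rewrite mem_t ltnS => /andP[].
Qed.

Lemma lpath_le_Xn : (lpath wt N <= Xn w)%N.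
Proof.
have [s [path_s last_s weight_s]] := lpath_attained wt N.
pose S := [set x : 'I_N.+1 | val x \in 0 :: s].
have S_path : is_path_set S.
  apply/forallP => k; apply/implyP; rewrite inE /=.
  by case/orP => /eqP ->; rewrite ?mem_head // -last_s mem_last.
have le_N : all (leq^~ N) (0 :: s) by rewrite -last_s path_ltn_le_last.
apply: leq_trans (leq_bigmax_cond _ S_path); rewrite path_weightE -weight_s.
suff -> : vertices S = 0 :: s by [].
apply: (irr_sorted_eq ltn_trans ltnn (sorted_vertices S) (path_s : sorted ltn (0 :: s))) => x.
rewrite mem_vertices inE /=; case: ltnP => [lt_x|le_x]; first by rewrite inordK.
by apply/esym/negbTE; apply: contraTN le_x => /(allP le_N); rewrite -ltnS ltnNge.
Qed.

Lemma Xn_lpath : Xn w = lpath wt N.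
Proof. by apply/eqP; rewrite eqn_leq Xn_le_lpath lpath_le_Xn. Qed.

End PathSets.

Section BernoulliExpectation.

Variables (R : realFieldType) (p : R) (I : finType).

Definition bern_weight (w : {ffun I -> bool}) : R := \prod_i (if w i then p else 1 - p).

Definition expect (F : {ffun I -> bool} -> R) : R := \sum_w bern_weight w * F w.

Lemma expect_prod (f : I -> bool -> R) :
  expect (fun w => \prod_i f i (w i)) = \prod_i (p * f i true + (1 - p) * f i false).
Proof.
rewrite (eq_bigr (fun i => \sum_(b : bool) (if b then p else 1 - p) * f i b)).
  by rewrite bigA_distr_bigA; apply: eq_bigr => w _; rewrite big_split.
by move=> i _; rewrite big_bool.
Qed.

Lemma sum_bern_weight : \sum_w bern_weight w = 1.
Proof.
rewrite -(bigA_distr_bigA (fun _ (b : bool) => if b then p else 1 - p)).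
by apply: big1 => i _; rewrite big_bool /= subrKC.
Qed.

Lemma eq_expect F G : F =1 G -> expect F = expect G.
Proof. by move=> eqFG; apply: eq_bigr => w _; rewrite eqFG. Qed.

Lemma expect_cst c : expect (fun=> c) = c.
Proof. by rewrite /expect -mulr_suml sum_bern_weight mul1r. Qed.

Lemma expectD F G : expect (fun w => F w + G w) = expect F + expect G.
Proof. by rewrite /expect -big_split; apply: eq_bigr => w _; rewrite mulrDr. Qed.

Lemma expectZ a F : expect (fun w => a * F w) = a * expect F.
Proof. by rewrite /expect mulr_sumr; apply: eq_bigr => w _; rewrite mulrCA. Qed.

Lemma expect_sum (J : Type) (s : seq J) (P : pred J) (F : J -> {ffun I -> bool} -> R) :
  expect (fun w => \sum_(j <- s | P j) F j w) = \sum_(j <- s | P j) expect (F j).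
Proof. by rewrite /expect exchange_big; apply: eq_bigr => w _; rewrite mulr_sumr. Qed.

Definition splice (A : pred I) (w c : {ffun I -> bool}) : {ffun I -> bool} :=
  [ffun i => if A i then c i else w i].

Lemma spliceK A w c : splice A (splice A w c) (splice A c w) = w.
Proof. by apply/ffunP => i; rewrite !ffunE; case: (A i). Qed.

Lemma bern_weight_splice A w c :
  bern_weight (splice A w c) * bern_weight (splice A c w) = bern_weight w * bern_weight c.
Proof.
rewrite -!big_split; apply: eq_bigr => i _; rewrite !ffunE.
by case: (A i); rewrite //= mulrC.
Qed.

(* Independence: the coordinates in A may be resampled from a fresh copy c. *)
Lemma expect_splice A F : expect F = expect (fun w => expect (fun c => F (splice A w c))).
Proof.
rewrite /expect; under [RHS]eq_bigr do rewrite mulr_sumr.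
rewrite pair_big /=.
have swapK : involutive (fun wc : {ffun I -> bool} * {ffun I -> bool} =>
  (splice A wc.1 wc.2, splice A wc.2 wc.1)).
  by move=> [w c]; rewrite /= !spliceK.
rewrite (reindex_inj (inv_inj swapK)) /=.
under [RHS]eq_bigr do rewrite mulrA bern_weight_splice spliceK.
rewrite -(pair_big xpredT xpredT (fun w c => bern_weight w * bern_weight c * F w)) /=.
by apply: eq_bigr => w _; rewrite -mulr_suml -mulr_sumr sum_bern_weight mulr1.
Qed.

End BernoulliExpectation.

Section PlateauDistribution.

Variables (R : realFieldType) (p : R) (N : nat).

Local Notation graph := {ffun edge N.+1 -> bool}.

Definition edges_into (t : nat) : pred (edge N.+1) := fun e => ((val e).2 : nat) == t.

Lemma wt_le1 (w : graph) a b : (wt w a b <= 1)%N.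
Proof. by rewrite /wt /ewt; case: insub => // e; exact: leq_b1. Qed.

Lemma ewt_val (c : graph) (e : edge N.+1) : ewt c (val e).1 (val e).2 = c e.
Proof. by rewrite /ewt -surjective_pairing valK. Qed.

Lemma ewt_eq1 (c : graph) a b : ewt c a b = 1%N -> exists2 e, val e = (a, b) & c e.
Proof. by rewrite /ewt; case: insubP => // e _ val_e; exists e => //; case: (c e) H. Qed.

Lemma wt_splice t (w c : graph) a b : (b <= N)%N ->
  wt (splice (edges_into t) w c) a b = if b == t then wt c a b else wt w a b.
Proof.
move=> le_b_N; rewrite /wt /ewt; case: insubP => [e _ val_e|_]; last by case: ifP.
by move: val_e; rewrite ffunE /edges_into /= => ->; rewrite inordK //; case: ifP.
Qed.

Lemma lpath_splice v (w c : graph) u : (u <= v < N)%N ->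
  lpath (wt (splice (edges_into v.+1) w c)) u = lpath (wt w) u.
Proof.
move=> /andP[le_u_v lt_v_N]; apply: lpath_eq => a b le_b_u.
by rewrite wt_splice; [case: eqP => //; lia | lia].
Qed.

Definition edges_from_into (P : pred nat) (t : nat) : pred (edge N.+1) :=
  fun e => (((val e).2 : nat) == t) && P (val e).1.

Lemma card_edges_from_into (P : pred nat) t : (0 < t <= N)%N ->
  #|edges_from_into P t| = (\sum_(u < t) P u)%N.
Proof.
move=> /andP[t_gt0 le_t_N].
have src_inj : {in edges_from_into P t &, injective (fun e : edge N.+1 => (val e).1)}.
  move=> e1 e2 /andP[/eqP dst_e1 _] /andP[/eqP dst_e2 _] src_e.
  apply/val_inj/injective_projections => //; apply/val_inj.
  by rewrite /= dst_e1 dst_e2.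
rewrite -(card_in_image src_inj) -sum1_card.
rewrite (eq_bigl (fun u : 'I_N.+1 => (u < t)%N && P u)) => [|u].
  rewrite (big_ord_widen N.+1 (fun u => P u : nat)) ?big_mkcondr; last by lia.
  by apply: eq_bigr => u _; case: (P u).
apply/imageP/andP => [[e /andP[/eqP dst_e P_e] ->]|[lt_u_t P_u]].
  by rewrite -dst_e (valP e).
have lt_u_t' : ((u, inord t : 'I_N.+1).1 < (u, inord t : 'I_N.+1).2)%N.
  by rewrite /= inordK // ltnS.
exists (Sub (u, inord t) lt_u_t');
by rewrite ?unfold_in /edges_from_into SubK //= inordK ?eqxx // ltnS.
Qed.

Lemma exists_edge_from_into (P : pred nat) t (c : graph) : (t <= N)%N ->
  [exists u : 'I_t, P u && (wt c u t == 1%N)] =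
  [exists e, edges_from_into P t e && c e].
Proof.
move=> le_t_N; apply/existsP/existsP => [[u /andP[P_u /eqP/ewt_eq1[e val_e c_e]]]|].
  have := ltn_ord u; exists e.
  by rewrite /edges_from_into val_e /= !inordK ?eqxx ?P_u ?c_e //; lia.
move=> [e /andP[/andP[/eqP dst_e P_e] c_e]].
have lt_src_t : ((val e).1 < t)%N by rewrite -dst_e (valP e).
exists (Ordinal lt_src_t); rewrite /= P_e /wt -dst_e !inord_val.
by have /= -> := ewt_val c e; rewrite c_e.
Qed.

Lemma expect_no_edge_into t (P : pred nat) : (0 < t <= N)%N ->
  expect p (fun c : graph => (~~ [exists u : 'I_t, P u && (wt c u t == 1%N)])%:R) =
  (1 - p) ^+ (\sum_(u < t) P u)%N.
Proof.
move=> t_range; have /andP[_ le_t_N] := t_range; set Q := edges_from_into P t.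
transitivity (expect p (fun c : graph => \prod_e ((~~ (Q e && c e))%:R : R))).
  apply: eq_expect => c; rewrite -natr_prod.
  rewrite -(big_morph nat_of_bool (fun x y => esym (mulnb x y)) (erefl : nat_of_bool true = 1%N)).
  by rewrite big_andE -negb_exists exists_edge_from_into.
have /= -> := expect_prod p (fun e (b : bool) => ((~~ (Q e && b))%:R : R)).
rewrite (eq_bigr (fun e => if Q e then 1 - p else 1)) => [|e _]; last first.
  by case: (Q e); rewrite /= ?mulr1 ?mulr0 ?addr0 ?add0r ?subrKC.
by rewrite -big_mkcond prodr_const card_edges_from_into.
Qed.

Lemma plateau_splice v (w c : graph) : (v < N)%N ->
  plateau (wt (splice (edges_into v.+1) w c)) v = plateau (wt w) v.
Proof.
move=> lt_v_N; apply: eq_bigr => u _.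
by rewrite !lpath_splice ?leqnn ?lt_v_N // -ltnS ltn_ord.
Qed.

Lemma lpath_step_splice v (w c : graph) : (v < N)%N ->
  lpath_step (wt (splice (edges_into v.+1) w c)) v =
  [exists u : 'I_v.+1, (lpath (wt w) u == lpath (wt w) v) && (wt c u v.+1 == 1%N)].
Proof.
move=> lt_v_N; apply: eq_existsb => u.
by rewrite !lpath_splice ?wt_splice ?eqxx ?leqnn ?lt_v_N // -ltnS ltn_ord.
Qed.

Definition plateau_prob v l : R := expect p (fun w : graph => (plateau (wt w) v == l)%:R).

(* The edges into v+1 are independent of the longest paths to 0, ..., v, and the
   longest path gains one at v+1 iff one of the [plateau v] edges into v+1 from
   the current plateau has weight 1. *)
Lemma expect_plateau_no_step v l : (v < N)%N ->
  expect p (fun w : graph => ((plateau (wt w) v == l) && ~~ lpath_step (wt w) v)%:R) =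
  (1 - p) ^+ l * plateau_prob v l.
Proof.
move=> lt_v_N; rewrite (expect_splice _ (edges_into v.+1)) -expectZ.
apply: eq_expect => w.
under eq_expect => c do rewrite plateau_splice // lpath_step_splice // -mulnb natrM.
rewrite expectZ (@expect_no_edge_into v.+1 (fun u => lpath (wt w) u == lpath (wt w) v)) //.
by case: eqP => [<-|_]; rewrite ?mul0r ?mulr0 // mulrC.
Qed.

Lemma expect_plateau_step v l : (v < N)%N ->
  expect p (fun w : graph => ((plateau (wt w) v == l) && lpath_step (wt w) v)%:R) =
  (1 - (1 - p) ^+ l) * plateau_prob v l.
Proof.
move=> lt_v_N; rewrite mulrBl mul1r -expect_plateau_no_step //.
apply/eqP; rewrite eq_sym subr_eq -expectD; apply/eqP/eq_expect => w.
by case: (_ == l); case: lpath_step; rewrite /= ?addr0 ?add0r.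
Qed.

Lemma plateau_prob0n l : plateau_prob 0 l = (l == 1%N)%:R.
Proof.
rewrite -[RHS](@expect_cst _ p (edge N.+1)); apply: eq_expect => w.
by rewrite /plateau big_ord1 eqxx eq_sym.
Qed.

Lemma plateau_prob0 v : plateau_prob v 0 = 0.
Proof.
rewrite -[RHS](@expect_cst _ p (edge N.+1)); apply: eq_expect => w.
by rewrite eqn0Ngt plateau_gt0.
Qed.

Lemma plateau_probSS v l : (v < N)%N ->
  plateau_prob v.+1 l.+2 = (1 - p) ^+ l.+1 * plateau_prob v l.+1.
Proof.
move=> lt_v_N; rewrite -expect_plateau_no_step //; apply: eq_expect => w.
by rewrite (plateauS (wt_le1 w)); case: lpath_step; rewrite ?andbF ?andbT.
Qed.

Lemma plateau_probS1 v : (v < N)%N ->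
  plateau_prob v.+1 1 = \sum_(l < v.+2) (1 - (1 - p) ^+ l) * plateau_prob v l.
Proof.
move=> lt_v_N; under eq_bigr do rewrite -expect_plateau_step //.
rewrite -expect_sum; apply: eq_expect => w; rewrite (plateau_eq1 (wt_le1 w)).
have lt_plateau : (plateau (wt w) v < v.+2)%N by rewrite ltnS plateau_le.
rewrite (bigD1 (Ordinal lt_plateau)) //= eqxx big1 ?addr0 // => l.
by rewrite -val_eqE /= eq_sym => /negbTE ->.
Qed.

Lemma expect_lpathS v : (v < N)%N ->
  expect p (fun w : graph => (lpath (wt w) v.+1)%:R) =
  expect p (fun w : graph => (lpath (wt w) v)%:R) + plateau_prob v.+1 1.
Proof.
move=> lt_v_N; rewrite -expectD; apply: eq_expect => w.
by rewrite (lpathS_step (wt_le1 w) v) natrD (plateau_eq1 (wt_le1 w) v).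
Qed.

Lemma expect_lpath v : (v <= N)%N ->
  expect p (fun w : graph => (lpath (wt w) v)%:R) = \sum_(k < v) plateau_prob k.+1 1.
Proof.
elim: v => [|v IHv] le_v_N; first by rewrite big_ord0; exact: expect_cst.
by rewrite expect_lpathS // IHv ?big_ord_recr // ltnW.
Qed.

End PlateauDistribution.

Section PlateauRecursion.

Variables (R : realFieldType) (p : R) (N : nat).

Lemma plateau_probE v l : (v <= N)%N -> plateau_prob p N v l =
  if (0 < l <= v.+1)%N then plateau_prob p N (v.+1 - l) 1 * (1 - p) ^+ 'C(l, 2) else 0.
Proof.
elim: v l => [|v IHv] [|[|l]] le_v_N //=; rewrite ?plateau_prob0 ?subn1 ?mulr1 //.
  by rewrite plateau_prob0n.
rewrite plateau_probSS // IHv; last exact: ltnW.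
rewrite /= !ltnS !subSS; case: leqP => _; last by rewrite mulr0.
by rewrite (binS l.+1 1) bin1 exprD mulrCA [_ ^+ l.+1 * _]mulrC.
Qed.

Lemma plateau_prob1S v : (v < N)%N -> plateau_prob p N v.+1 1 =
  \sum_(l < v.+1) plateau_prob p N (v - l) 1 * (Bcoef p l - Bcoef p l.+1).
Proof.
move=> lt_v_N; rewrite plateau_probS1 // big_ord_recl expr0 subrr mul0r add0r.
apply: eq_bigr => l _; rewrite (plateau_probE _ (ltnW lt_v_N)) ltnS ltn_ord /= subSS.
by rewrite /Bcoef /= (binS l.+1 1) bin1 exprD; ring.
Qed.

End PlateauRecursion.

Section PartialSums.

Variables (R : realFieldType) (b h : nat -> R).
Hypotheses (b0 : b 0%N = 1) (inv_h : is_inverse_series b h).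

Definition partial_sum (k : nat) : R := \sum_(m < k.+1) h m.

Lemma conv_partial_sum m : \sum_(k < m.+1) b k * partial_sum (m - k) = 1.
Proof.
elim: m => [|m IHm].
  by have := inv_h 0%N; rewrite !big_ord1 /partial_sum big_ord1.
rewrite big_ord_recr subnn /=.
transitivity (\sum_(k < m.+1) b k * partial_sum (m - k) +
  (\sum_(k < m.+1) b k * h (m.+1 - k)%N + b m.+1 * h 0%N)).
  rewrite addrA -big_split /=; congr (_ + _); last by rewrite /partial_sum big_ord1.
  apply: eq_bigr => k _; rewrite -mulrDr /partial_sum subSn ?big_ord_recr //.
  by rewrite -ltnS.
by have := inv_h m.+1; rewrite big_ord_recr subnn /= IHm => ->; rewrite addr0.
Qed.

Lemma partial_sumS v :
  partial_sum v.+1 = \sum_(l < v.+1) partial_sum (v - l) * (b l - b l.+1).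
Proof.
have := conv_partial_sum v.+1; rewrite big_ord_recl b0 mul1r subn0 /= => conv_vS.
under eq_bigr do rewrite mulrBr [_ * b _]mulrC [_ * b _.+1]mulrC.
by rewrite sumrB conv_partial_sum -conv_vS addrK.
Qed.

End PartialSums.

Lemma EXnE (R : realFieldType) (p : R) n :
  EXn p n = expect p (fun w : {ffun edge n -> bool} => (Xn w)%:R).
Proof. by []. Qed.

Lemma Bcoef0 (R : realFieldType) (p : R) : Bcoef p 0 = 1.
Proof. by []. Qed.

Lemma plateau_prob1_partial_sum (R : realFieldType) (p : R) h N k :
  is_inverse_series (Bcoef p) h -> (k <= N)%N -> plateau_prob p N k 1 = partial_sum h k.
Proof.
move=> inv_h; elim/ltn_ind: k => -[|k] IHk le_k_N.
  by have := conv_partial_sum inv_h 0; rewrite big_ord1 mul1r plateau_prob0n.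
rewrite plateau_prob1S // (partial_sumS (Bcoef0 p) inv_h); apply: eq_bigr => l _.
by rewrite IHk //; lia.
Qed.

Lemma gfun_partial_sums (R : realFieldType) (p : R) h N :
  is_inverse_series (Bcoef p) h -> gfun p N.+1 = \sum_(k < N.+1) partial_sum h k.
Proof.
move=> inv_h; rewrite /gfun EXnE.
under eq_expect do rewrite Xn_lpath.
rewrite expect_lpath // big_ord_recl -(plateau_prob1_partial_sum inv_h (leq0n N)).
rewrite plateau_prob0n; congr (_ + _); apply: eq_bigr => k _.
by rewrite (plateau_prob1_partial_sum inv_h).
Qed.

Lemma sum_partial_sum (R : realFieldType) (h : nat -> R) n :
  \sum_(k < n) partial_sum h k = \sum_(m < n) (n - m)%:R * h m.
Proof.
elim: n => [|n IHn]; first by rewrite !big_ord0.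
rewrite big_ord_recr IHn [RHS]big_ord_recr /= /partial_sum big_ord_recr /= addrA -big_split.
rewrite subSn // subnn mul1r; congr (_ + _); apply: eq_bigr => m _.
by rewrite subSn 1?ltnW //= mulrSr mulrDl mul1r.
Qed.

Theorem corollary4 (R : realFieldType) (p : R) (h : nat -> R)
  (hp0 : 0 < p) (hp1 : p < 1)
  (hinv : is_inverse_series (Bcoef p) h) :
  (forall n : nat, (1 <= n)%N ->
     h n = \sum_(1 <= j < n.+1) (-1) ^+ j * compW p n j) /\
  (forall n : nat, (1 <= n)%N ->
     [/\ gfun p n = \sum_(m < n) (n - m)%:R * h m,
         gfun p n = \sum_(m < n) (n - m)%:R * compSum p m &
         gfun p n = \sum_(m < n) \sum_(j < m.+1) \sum_(k < j.+1)
                       (-1) ^+ k * compW p j k]).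
Proof.
(* The identities are polynomial in p. *)
split=> -[|N] // _.
  rewrite (compSum_inverse hinv) /compSum big_ord_recl compW_conv_pow /= mulr0 add0r.
  by rewrite big_add1 big_mkord.
have gfunE := gfun_partial_sums N hinv; split.
- by rewrite gfunE sum_partial_sum.
- by rewrite gfunE sum_partial_sum; apply: eq_bigr => m _; rewrite (compSum_inverse hinv).
- by rewrite gfunE; apply: eq_bigr => m _; apply: eq_bigr => j _; rewrite (compSum_inverse hinv).
Qed.
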